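(* Let $G$ be a finite simple graph. Then $\mathrm{mur}(G)=0$ if and only if $G$ or its complement $\overline{G}$ is a complete graph.
   Context: For a finite simple undirected graph $G$ on vertices $v_1,\dots,v_n$, let $A_G$ be its $(0,1)$-adjacency matrix, $D_G=\mathrm{diag}(d_1,\dots,d_n)$ with $d_i$ the degree of $v_i$, $I$ the $n\times n$ identity matrix and $J$ the $n\times n$ all-ones matrix. A universal adjacency matrix of $G$ is any matrix $\alpha A_G+\beta I+\gamma J+\delta D_G$ with real scalars $\alpha,\beta,\gamma,\delta$ and $\alpha\neq 0$. The minimum universal rank $\mathrm{mur}(G)$ is the minimum rank over all universal adjacency matrices of $G$. *)

From mathcomp Require Import all_boot all_order all_algebra.
From mathcomp Require Import all_classical all_reals.
Set Implicit Arguments. Unset Strict Implicit. Unset Printing Implicit Defensive.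
Import Order.TTheory GRing.Theory Num.Theory.
Local Open Scope ring_scope.

Definition simple_graph (n : nat) (e : rel 'I_n) : Prop :=
  (forall i, ~~ e i i) /\ (forall i j, e i j = e j i).

Definition complete (n : nat) (e : rel 'I_n) : Prop :=
  forall i j, i != j -> e i j.

Definition compl_graph (n : nat) (e : rel 'I_n) : rel 'I_n :=
  fun i j => (i != j) && ~~ e i j.

Section Mats.
Variable R : realType.
Variable n : nat.
Variable e : rel 'I_n.

Definition adjmx : 'M[R]_n := \matrix_(i, j) (e i j)%:R.
Definition degmx : 'M[R]_n :=
  \matrix_(i, j) ((i == j)%:R * (#|[pred k | e i k]|)%:R).
Definition Jmx : 'M[R]_n := const_mx 1.

Definition univ_adj (alpha beta gamma delta : R) : 'M[R]_n :=
  alpha *: adjmx + beta *: 1%:M + gamma *: Jmx + delta *: degmx.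

Definition univ_rank (r : nat) : Prop :=
  exists alpha beta gamma delta : R,
    alpha != 0 /\ \rank (univ_adj alpha beta gamma delta) = r.

Lemma univ_rank_ex : exists r, univ_rank r.
Proof. by exists (\rank (univ_adj 1 0 0 0)); exists 1, 0, 0, 0; rewrite oner_eq0. Qed.

Definition univ_rankb (r : nat) : bool := `[< univ_rank r >].

Lemma univ_rankb_ex : exists r, univ_rankb r.
Proof. by have [r Hr] := univ_rank_ex; exists r; apply/asboolP. Qed.

Definition mur : nat := ex_minn univ_rankb_ex.
End Mats.

From mathcomp Require Import all_boot all_order all_algebra.
From mathcomp Require Import all_classical all_reals.
Import Order.TTheory GRing.Theory Num.Theory.
Local Open Scope ring_scope.

(* Rank 0 means the universal adjacency matrix vanishes.  Off the diagonal its
   entries are [alpha * e i j + gamma]; if some pair of distinct vertices is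
   non-adjacent this forces [gamma = 0], and then [alpha != 0] forbids every
   edge.  Conversely [A + I - J] vanishes on a complete graph and [A] on an
   empty one. *)

Section UniversalAdjacency.
Variables (R : realType) (n : nat) (e : rel 'I_n).

Lemma mur_eq0 : mur R e = 0%N <-> univ_rank R e 0.
Proof.
rewrite /mur; case: ex_minnP => m /asboolP rank_m min_m; split=> [m0|rank0].
  by rewrite -m0.
by apply/eqP; rewrite -leqn0 min_m //; apply/asboolP.
Qed.

Lemma univ_adj_offdiag (a b g d : R) {i j : 'I_n} :
  i != j -> univ_adj e a b g d i j = a * (e i j)%:R + g.
Proof. by move=> ij; rewrite !mxE (negbTE ij) /= mul0r !mulr0 !addr0 mulr1. Qed.

Lemma univ_adj_eq0_complete (a b g d : R) :
  a != 0 -> univ_adj e a b g d = 0 -> complete e \/ complete (compl_graph e).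
Proof.
move=> a0 A0.
have offdiag0 i j : i != j -> a * (e i j)%:R + g = 0.
  by move=> ij; rewrite -(univ_adj_offdiag a b g d ij) A0 mxE.
have [[i j] /= /andP[ij nij] | all_edges] :=
  pickP [pred ij : 'I_n * 'I_n | (ij.1 != ij.2) && ~~ e ij.1 ij.2].
  right=> k l kl.
  have g0 : g = 0 by have := offdiag0 _ _ ij; rewrite (negbTE nij) mulr0 add0r.
  rewrite /compl_graph kl /=; apply/negP=> ekl.
  by move: (offdiag0 k l kl); rewrite ekl g0 addr0 mulr1; apply/eqP.
left=> k l kl; move: (all_edges (k, l)) => /=.
by rewrite kl /= => /negbFE.
Qed.

Hypothesis irr : forall i, ~~ e i i.

Lemma univ_adj_complete_eq0 : complete e -> univ_adj e 1 1 (-1) (0 : R) = 0.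
Proof.
move=> C; apply/matrixP=> i j; have [<-|ij] := eqVneq i j.
  by rewrite !mxE eqxx (negbTE (irr i)) mulr0 add0r mul0r addr0 !mulr1 addrN.
by rewrite univ_adj_offdiag // C // mul1r addrN mxE.
Qed.

Lemma univ_adj_empty_eq0 : complete (compl_graph e) -> univ_adj e 1 0 0 (0 : R) = 0.
Proof.
move=> C; apply/matrixP=> i j; have [<-|ij] := eqVneq i j.
  by rewrite !mxE eqxx (negbTE (irr i)) !mul0r !mulr0 !addr0.
have /andP[_ /negbTE nij] := C i j ij.
by rewrite univ_adj_offdiag // nij mulr0 addr0 mxE.
Qed.

End UniversalAdjacency.

Theorem theorem2 (R : realType) (n : nat) (e : rel 'I_n) :
  simple_graph e ->
  (mur R e = 0%N <-> (complete e \/ complete (compl_graph e))).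
Proof.
move=> [irr _]; rewrite mur_eq0; split.
  move=> [a [b [g [d [a0 /eqP]]]]]; rewrite mxrank_eq0 => /eqP.
  exact: univ_adj_eq0_complete.
move=> [C|C].
  exists 1, 1, (-1), 0; split; first exact: oner_neq0.
  by apply/eqP; rewrite mxrank_eq0 univ_adj_complete_eq0.
exists 1, 0, 0, 0; split; first exact: oner_neq0.
by apply/eqP; rewrite mxrank_eq0 univ_adj_empty_eq0.
Qed.
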